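(* Fix an integer $d\ge 8$. The sequence $\psi^{(k)}(\mathbf{0})$, $k=0,1,2,\dots$, does not converge pointwise, where $\mathbf{0}=(0,0,\dots)$ and $\psi^{(k)}$ is the $k$-fold iterate of $\psi$.
   Context: For a probability distribution $z=(z_i)_{i\in\mathbb{Z}}$ on $\mathbb{Z}$ set $A(z)_i=(z_{i-1}+z_i+z_{i+1})^d$ and $F(z)=A(z)/\sum_{i}A(z)_i$. Let $\mathcal{E}$ be the set of symmetric ($z_i=z_{-i}$) probability distributions on $\mathbb{Z}$ whose support is an interval of $\mathbb{Z}$ or all of $\mathbb{Z}$. Define $\mathsf R\colon\mathcal{E}\to[0,\infty)^{\{1,2,\dots\}}$ by $\mathsf R(z)_i=z_i/z_{i-1}$ if $z_{i-1}\ne0$ and $0$ otherwise; $\mathsf R$ is injective on $\mathcal{E}$, $\mathcal{R}:=\mathsf R(\mathcal{E})$, and $\psi:=\mathsf R\circ F\circ\mathsf R^{-1}\colon\mathcal{R}\to\mathcal{R}$. Explicitly $\psi(x)_1=\big(\frac{1+x_1+x_1x_2}{1+2x_1}\big)^d$ and $\psi(x)_n=x_{n-1}^d\big(\frac{1+x_n+x_nx_{n+1}}{1+x_{n-1}+x_{n-1}x_n}\big)^d$ for $n\ge2$. Note $\mathbf 0=\mathsf R(\delta_0)\in\mathcal{R}$. *)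

From Stdlib Require Import Reals.
Open Scope R_scope.

(* Sequences x = (x_1, x_2, ...) in [0,oo)^{1,2,...} are represented as
   functions nat -> R; index 0 is unused (psi sets it to 0). *)
Definition psi (d : nat) (x : nat -> R) (n : nat) : R :=
  match n with
  | O => 0
  | S O => ((1 + x 1%nat + x 1%nat * x 2%nat) / (1 + 2 * x 1%nat)) ^ d
  | S (S m) =>
      let n := S (S m) in
      (x (S m)) ^ d *
      ((1 + x n + x n * x (S n)) / (1 + x (S m) + x (S m) * x n)) ^ d
  end.

Definition zero_seq : nat -> R := fun _ => 0.

Definition psi_iter (d k : nat) (x : nat -> R) : nat -> R :=
  Nat.iter k (psi d) x.

From Stdlib Require Import Reals Lra Lia.
Open Scope R_scope.

(* The orbit of 0 stays in the unit cube and alternates between the regions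
   A = {x_1 <= e} and B = {x_1 >= b, x_2 <= delta}.  On A, psi_1 =
   ((1 + x_1 + x_1 x_2) / (1 + 2 x_1))^d >= ((1 + e) / (1 + 2 e))^d is large
   and psi_2 <= (3 x_1)^d is tiny; on B, psi_1 <= ((1 + b (1 + delta)) /
   (1 + 2 b))^d is small.  So the first coordinate oscillates between [0, e]
   and [b, 1] once e < b.  For d >= 11 one can take e = 1/(2d), b = 1/2 (by
   Bernoulli's inequality) and delta = 1/100; d = 8, 9, 10 are checked
   numerically. *)

Lemma Rdiv_le_Rdiv_cross (u v p q : R) :
  0 < v -> 0 < q -> u * q <= p * v -> u / v <= p / q.
Proof.
  intros Hv Hq H.
  replace (u / v) with (u * q * / (v * q)) by (field; lra).
  replace (p / q) with (p * v * / (v * q)) by (field; lra).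
  apply Rmult_le_compat_r; [|exact H].
  apply Rlt_le, Rinv_0_lt_compat; nra.
Qed.

Lemma Rdiv_in_unit (u v : R) : 0 < v -> 0 <= u <= v -> 0 <= u / v <= 1.
Proof.
  intros Hv Hu. split.
  - apply Rmult_le_pos; [lra|]. apply Rlt_le, Rinv_0_lt_compat; lra.
  - replace 1 with (1 / 1) by field. apply Rdiv_le_Rdiv_cross; lra.
Qed.

Lemma pow_in_unit (a : R) (n : nat) : 0 <= a <= 1 -> 0 <= a ^ n <= 1.
Proof.
  intros Ha. split; [apply pow_le; lra|].
  rewrite <- (pow1 n). apply pow_incr. lra.
Qed.

Lemma pow_le_pow_of_le_1 (a : R) (m n : nat) :
  0 <= a <= 1 -> (m <= n)%nat -> a ^ n <= a ^ m.
Proof.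
  intros Ha Hmn. replace n with (m + (n - m))%nat by lia. rewrite pow_add.
  assert (0 <= a ^ m) by (apply pow_le; lra).
  assert (Hle := pow_in_unit a (n - m) Ha). nra.
Qed.

Lemma Bernoulli_ineq (x : R) (n : nat) : -1 <= x -> 1 + INR n * x <= (1 + x) ^ n.
Proof.
  intros Hx. induction n as [|n IH]; [simpl; lra|].
  rewrite S_INR, <- tech_pow_Rmult.
  assert (0 <= INR n) by apply pos_INR.
  assert (0 <= INR n * (x * x)) by (apply Rmult_le_pos; nra).
  nra.
Qed.

Lemma first_ratio_in_unit (s t : R) :
  0 <= s -> 0 <= t <= 1 -> 0 <= (1 + s + s * t) / (1 + 2 * s) <= 1.
Proof. intros Hs Ht. apply Rdiv_in_unit; nra. Qed.

Lemma first_ratio_lower (e s t : R) :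
  0 <= s <= e -> 0 <= t -> (1 + e) / (1 + 2 * e) <= (1 + s + s * t) / (1 + 2 * s).
Proof.
  intros Hs Ht. apply Rdiv_le_Rdiv_cross; [lra|lra|].
  assert (0 <= s * t * (1 + 2 * e)) by (apply Rmult_le_pos; nra). nra.
Qed.

Lemma first_ratio_upper (b delta s t : R) :
  0 <= b <= s -> 0 <= t <= delta -> delta <= 1 ->
  (1 + s + s * t) / (1 + 2 * s) <= (1 + b * (1 + delta)) / (1 + 2 * b).
Proof.
  intros Hs Ht Hdelta. apply Rdiv_le_Rdiv_cross; [lra|lra|].
  assert (s * t * (1 + 2 * b) <= s * delta * (1 + 2 * b))
    by (apply Rmult_le_compat_r; nra).
  assert (0 <= (s - b) * (1 - delta)) by (apply Rmult_le_pos; lra).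
  nra.
Qed.

Lemma shifted_ratio_in_unit (a s t : R) :
  0 <= a <= 1 -> 0 <= s <= 1 -> 0 <= t <= 1 ->
  0 <= a * ((1 + s + s * t) / (1 + a + a * s)) <= 3 * a.
Proof.
  intros Ha Hs Ht.
  assert (0 <= a * s) by nra.
  assert (s * t <= 1) by nra.
  rewrite Rmult_div_assoc.
  replace (3 * a) with (3 * a / 1) by field.
  split.
  - apply Rmult_le_pos; [nra|]. apply Rlt_le, Rinv_0_lt_compat; lra.
  - apply Rdiv_le_Rdiv_cross; nra.
Qed.

Lemma shifted_ratio_le_1 (a s t : R) :
  0 <= a <= 1 -> 0 <= s <= 1 -> 0 <= t <= 1 ->
  a * ((1 + s + s * t) / (1 + a + a * s)) <= 1.
Proof.
  intros Ha Hs Ht.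
  assert (0 <= a * s) by nra.
  assert (a * (s * t) <= 1) by (assert (s * t <= 1) by nra; nra).
  rewrite Rmult_div_assoc. apply Rdiv_in_unit; nra.
Qed.

Lemma psi_one (d : nat) (x : nat -> R) :
  psi d x 1 = ((1 + x 1%nat + x 1%nat * x 2%nat) / (1 + 2 * x 1%nat)) ^ d.
Proof. reflexivity. Qed.

Lemma psi_SS (d : nat) (x : nat -> R) (m : nat) :
  psi d x (S (S m)) =
  (x (S m) * ((1 + x (S (S m)) + x (S (S m)) * x (S (S (S m))))
              / (1 + x (S m) + x (S m) * x (S (S m))))) ^ d.
Proof. simpl. rewrite Rpow_mult_distr. reflexivity. Qed.

Definition unit_cube (x : nat -> R) : Prop := forall n, 0 <= x n <= 1.

Lemma psi_unit_cube (d : nat) (x : nat -> R) : unit_cube x -> unit_cube (psi d x).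
Proof.
  intros Hx [|[|m]].
  - simpl. lra.
  - rewrite psi_one. apply pow_in_unit, first_ratio_in_unit; apply Hx.
  - rewrite psi_SS. apply pow_in_unit. split.
    + apply (shifted_ratio_in_unit _ _ (x (S (S (S m))))); apply Hx.
    + apply shifted_ratio_le_1; apply Hx.
Qed.

Lemma not_Un_cv_alternating (u : nat -> R) (e b : R) :
  e < b -> (forall k, u (2 * k)%nat <= e) -> (forall k, b <= u (S (2 * k))) ->
  ~ exists l, Un_cv u l.
Proof.
  intros Heb Heven Hodd [l Hl].
  destruct (Hl ((b - e) / 2)) as [N HN]; [lra|].
  assert (Hl_even := HN (2 * N)%nat ltac:(lia)).
  assert (Hl_odd := HN (S (2 * N)) ltac:(lia)).
  unfold R_dist in *. apply Rabs_def2 in Hl_even, Hl_odd.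
  specialize (Heven N). specialize (Hodd N). lra.
Qed.

Section Alternation.
Variables (d : nat) (e b delta : R).
Hypothesis e_nonneg : 0 <= e.
Hypothesis b_nonneg : 0 <= b.
Hypothesis delta_le_1 : delta <= 1.
Hypothesis low_first_bound : b <= ((1 + e) / (1 + 2 * e)) ^ d.
Hypothesis low_second_bound : (3 * e) ^ d <= delta.
Hypothesis high_first_bound : ((1 + b * (1 + delta)) / (1 + 2 * b)) ^ d <= e.

Definition low_state (x : nat -> R) : Prop := unit_cube x /\ x 1%nat <= e.
Definition high_state (x : nat -> R) : Prop :=
  unit_cube x /\ b <= x 1%nat /\ x 2%nat <= delta.

Lemma psi_low_state (x : nat -> R) : low_state x -> high_state (psi d x).
Proof.
  intros [Hx Hx1]. split; [apply psi_unit_cube, Hx|]. split.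
  - eapply Rle_trans; [exact low_first_bound|]. rewrite psi_one. apply pow_incr.
    split.
    + apply Rlt_le, Rdiv_lt_0_compat; lra.
    + apply first_ratio_lower; [split; [apply Hx|exact Hx1]|apply Hx].
  - eapply Rle_trans; [|exact low_second_bound]. rewrite (psi_SS d x 0).
    apply pow_incr.
    assert (Hr := shifted_ratio_in_unit (x 1%nat) (x 2%nat) (x 3%nat)
                    (Hx 1%nat) (Hx 2%nat) (Hx 3%nat)).
    lra.
Qed.

Lemma psi_high_state (x : nat -> R) : high_state x -> low_state (psi d x).
Proof.
  intros [Hx [Hx1 Hx2]]. split; [apply psi_unit_cube, Hx|].
  eapply Rle_trans; [|exact high_first_bound]. rewrite psi_one. apply pow_incr.
  split.
  - apply first_ratio_in_unit; apply Hx.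
  - apply first_ratio_upper; [lra|split; [apply Hx|exact Hx2]|exact delta_le_1].
Qed.

Lemma psi_iter_zero_alternates (k : nat) :
  low_state (psi_iter d (2 * k) zero_seq) /\
  high_state (psi_iter d (S (2 * k)) zero_seq).
Proof.
  assert (Hlow : forall j, low_state (psi_iter d j zero_seq) ->
                 high_state (psi_iter d (S j) zero_seq))
    by (intros j; apply psi_low_state).
  induction k as [|k [_ IH]].
  - assert (H0 : low_state zero_seq) by (unfold zero_seq; split; [intro; lra|lra]).
    split; [exact H0|exact (Hlow 0%nat H0)].
  - replace (2 * S k)%nat with (S (S (2 * k))) by lia.
    assert (H : low_state (psi_iter d (S (S (2 * k))) zero_seq))
      by (apply psi_high_state, IH).
    split; [exact H|exact (Hlow _ H)].
Qed.

Lemma psi_iter_zero_first_not_cv :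
  e < b -> ~ exists l, Un_cv (fun k => psi_iter d k zero_seq 1%nat) l.
Proof.
  intros Heb. apply (not_Un_cv_alternating _ e b Heb); intros k;
    apply (psi_iter_zero_alternates k).
Qed.

End Alternation.

Lemma large_d_decay (d : nat) : (11 <= d)%nat -> 2 * INR d * (301 / 400) ^ d <= 1.
Proof.
  intros Hd. induction Hd as [|m Hm IH].
  - simpl. lra.
  - rewrite S_INR, <- tech_pow_Rmult.
    assert (11 <= INR m) by (apply (le_INR 11) in Hm; simpl in Hm; lra).
    assert (0 <= (301 / 400) ^ m) by (apply pow_le; lra).
    nra.
Qed.

Definition alternation_parameters (d : nat) (e b delta : R) : Prop :=
  0 <= e /\ e < b /\ delta <= 1 /\
  b <= ((1 + e) / (1 + 2 * e)) ^ d /\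
  (3 * e) ^ d <= delta /\
  ((1 + b * (1 + delta)) / (1 + 2 * b)) ^ d <= e.

Lemma alternation_parameters_large_d (d : nat) :
  (11 <= d)%nat -> alternation_parameters d (1 / (2 * INR d)) (1 / 2) (1 / 100).
Proof.
  intros Hd.
  assert (HD : 11 <= INR d) by (apply (le_INR 11) in Hd; simpl in Hd; lra).
  set (e := 1 / (2 * INR d)).
  assert (He : 0 < e <= 1 / 22)
    by (unfold e; split; [apply Rdiv_lt_0_compat|apply Rdiv_le_Rdiv_cross]; lra).
  assert (Hde : INR d * e = 1 / 2) by (unfold e; field; lra).
  repeat split; try lra.
  - assert (Hratio : 1 - e <= (1 + e) / (1 + 2 * e)).
    { replace (1 - e) with ((1 - e) / 1) by field.
      apply Rdiv_le_Rdiv_cross; nra. }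
    apply Rle_trans with ((1 - e) ^ d); [|apply pow_incr; lra].
    replace (1 - e) with (1 + - e) by ring.
    assert (Hb := Bernoulli_ineq (- e) d ltac:(lra)). nra.
  - eapply Rle_trans; [apply (pow_le_pow_of_le_1 _ 3); [lra|lia]|].
    assert (Hcube : (3 * e) ^ 3 <= (3 / 22) ^ 3) by (apply pow_incr; lra).
    simpl in Hcube |- *. lra.
  - replace ((1 + 1 / 2 * (1 + 1 / 100)) / (1 + 2 * (1 / 2))) with (301 / 400)
      by field.
    assert (Hdecay := large_d_decay d Hd).
    unfold e. apply (Rmult_le_reg_l (2 * INR d)); [lra|].
    replace (2 * INR d * (1 / (2 * INR d))) with 1 by (field; lra). lra.
Qed.

Lemma alternation_parameters_exist (d : nat) :
  (8 <= d)%nat -> exists e b delta, alternation_parameters d e b delta.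
Proof.
  intros Hd.
  destruct (Nat.le_gt_cases 11 d) as [Hlarge|Hsmall].
  - exists (1 / (2 * INR d)), (1 / 2), (1 / 100).
    exact (alternation_parameters_large_d d Hlarge).
  - assert (Hcases : (d = 8 \/ d = 9 \/ d = 10)%nat) by lia.
    destruct Hcases as [E | [E | E]]; subst d.
    + exists (1 / 8), (43 / 100), (1 / 1000).
      unfold alternation_parameters; simpl; lra.
    + exists (1 / 9), (2 / 5), (1 / 1000).
      unfold alternation_parameters; simpl; lra.
    + exists (1 / 10), (2 / 5), (1 / 1000).
      unfold alternation_parameters; simpl; lra.
Qed.

Theorem theorem2p5 (d : nat) (hd : (8 <= d)%nat) :
  ~ (forall n : nat, (1 <= n)%nat ->
       exists l : R, Un_cv (fun k : nat => psi_iter d k zero_seq n) l).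
Proof.
  intros Hconv.
  destruct (alternation_parameters_exist d hd)
    as (e & b & delta & He & Heb & Hdelta & Hlow1 & Hlow2 & Hhigh).
  apply (psi_iter_zero_first_not_cv d e b delta He ltac:(lra) Hdelta
           Hlow1 Hlow2 Hhigh Heb).
  exact (Hconv 1%nat (le_n 1)).
Qed.
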